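(* Let $(L,\le,\bot,\top)$ be a complete lattice and $(\&_i,\swarrow^i,\nwarrow_i)$, $i=1,\dots,n$, adjoint triples on $L$ with $x\,\&_i\,\top=\top\,\&_i\,x=x$ for all $x\in L$ and all $i$. Let $(A,B,R,\sigma)$ be a normalized context with concept lattice $\mathcal{M}$. If $\mathcal{M}$ has a decomposition into independent blocks $\{K_\mu\}_{\mu\in\Lambda}$, then the sets $\{A_\mu\mid\mu\in\Lambda\}$ form a partition of $A$ and the sets $\{B_\mu\mid\mu\in\Lambda\}$ form a partition of $B$, where, with $K_\mu^*=K_\mu\setminus\{\langle g_\top,f_\bot\rangle,\langle g_\bot,f_\top\rangle\}$, $$A_\mu=\{a\in A\mid\langle\phi_{a,x}^\downarrow,\phi_{a,x}^{\downarrow\uparrow}\rangle\in K_\mu^*\text{ for some }x\in L\},\quad B_\mu=\{b\in B\mid\langle\phi_{b,y}^{\uparrow\downarrow},\phi_{b,y}^{\uparrow}\rangle\in K_\mu^*\text{ for some }y\in L\}.$$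
   Context: An adjoint triple on $L$ is a triple of maps $\&,\swarrow,\nwarrow\colon L\times L\to L$ with $x\le z\swarrow y\iff x\& y\le z\iff y\le z\nwarrow x$. A context is $(A,B,R,\sigma)$ with $A,B$ non-empty, $R\colon A\times B\to L$, $\sigma\colon A\times B\to\{1,\dots,n\}$; normalized means every $a\in A$ has $b_1,b_2$ with $R(a,b_1)\ne\bot$, $R(a,b_2)=\bot$, and every $b\in B$ has $a_1,a_2$ with $R(a_1,b)\ne\bot$, $R(a_2,b)=\bot$. For $g\colon B\to L$, $f\colon A\to L$: $g^\uparrow(a)=\inf_{b}R(a,b)\swarrow^{\sigma(a,b)}g(b)$, $f^\downarrow(b)=\inf_{a}R(a,b)\nwarrow_{\sigma(a,b)}f(a)$. $\mathcal{M}$ is the complete lattice of pairs $\langle g,f\rangle$ with $g^\uparrow=f$, $f^\downarrow=g$, ordered by $g_1\le g_2$ pointwise; top $\langle g_\top,f_\bot\rangle$, bottom $\langle g_\bot,f_\top\rangle$ ($g_\top,g_\bot,f_\top,f_\bot$ constant maps). $\phi_{a,x}\colon A\to L$ takes value $x$ at $a$ and $\bot$ elsewhere; $\phi_{b,y}\colon B\to L$ takes value $y$ at $b$ and $\bot$ elsewhere. For a bounded lattice $(M,\preceq,\bot,\top)$, a block is a sublattice $K\subsetneq M$ with $K\setminus\{\bot,\top\}\ne\varnothing$ and $(\{x\mid k\preceq x\}\cup\{x\mid x\preceq k\})\setminus\{\bot,\top\}\subseteq K$ for all $k\in K\setminus\{\bot,\top\}$. Blocks $K_1,K_2$ are independent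 if $K_1\cap K_2\subseteq\{\bot,\top\}$. A decomposition into independent blocks is a family of pairwise independent blocks whose union is $M$. *)

From mathcomp Require Import ssreflect ssrfun ssrbool eqtype ssrnat fintype.
From Stdlib Require Import ClassicalEpsilon.

Set Implicit Arguments.
Unset Strict Implicit.
Unset Printing Implicit Defensive.

Record CompleteLattice := {
  cl_car :> Type;
  cl_le : cl_car -> cl_car -> Prop;
  cl_inf : (cl_car -> Prop) -> cl_car;
  cl_refl : forall x, cl_le x x;
  cl_antisym : forall x y, cl_le x y -> cl_le y x -> x = y;
  cl_trans : forall x y z, cl_le x y -> cl_le y z -> cl_le x z;
  cl_inf_lb : forall (S : cl_car -> Prop) x, S x -> cl_le (cl_inf S) x;
  cl_inf_glb : forall (S : cl_car -> Prop) y,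
      (forall x, S x -> cl_le y x) -> cl_le y (cl_inf S)
}.

Definition cl_bot (L : CompleteLattice) : L := cl_inf (fun _ : L => True).
Definition cl_top (L : CompleteLattice) : L := cl_inf (fun _ : L => False).

(* (conj, ld, rd) = (&, swarrow, nwarrow):
   x <= z swarrow y  <->  x & y <= z  <->  y <= z nwarrow x *)
Definition is_adjoint_triple (L : CompleteLattice) (conj ld rd : L -> L -> L) :=
  forall x y z : L,
    (cl_le x (ld z y) <-> cl_le (conj x y) z) /\
    (cl_le (conj x y) z <-> cl_le y (rd z x)).

Section Context.
Variables (L : CompleteLattice) (n : nat) (conj ld rd : 'I_n -> L -> L -> L)
  (A B : Type) (R : A -> B -> L) (sigma : A -> B -> 'I_n).

Definition normalized_context : Prop :=
  (forall a : A, exists b1 b2 : B, R a b1 <> cl_bot L /\ R a b2 = cl_bot L) /\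
  (forall b : B, exists a1 a2 : A, R a1 b <> cl_bot L /\ R a2 b = cl_bot L).

Definition up (g : B -> L) : A -> L :=
  fun a => cl_inf (fun z => exists b : B, z = ld (sigma a b) (R a b) (g b)).
Definition down (f : A -> L) : B -> L :=
  fun b => cl_inf (fun z => exists a : A, z = rd (sigma a b) (R a b) (f a)).

Definition pairT := ((B -> L) * (A -> L))%type.

Definition concept (c : pairT) : Prop := up c.1 = c.2 /\ down c.2 = c.1.

Definition leM (c1 c2 : pairT) : Prop := forall b : B, cl_le (c1.1 b) (c2.1 b).

Definition topM : pairT := (fun _ => cl_top L, fun _ => cl_bot L).
Definition botM : pairT := (fun _ => cl_bot L, fun _ => cl_top L).

Definition is_meetM (c1 c2 m : pairT) : Prop :=
  concept m /\ leM m c1 /\ leM m c2 /\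
  forall d, concept d -> leM d c1 -> leM d c2 -> leM d m.
Definition is_joinM (c1 c2 m : pairT) : Prop :=
  concept m /\ leM c1 m /\ leM c2 m /\
  forall d, concept d -> leM c1 d -> leM c2 d -> leM m d.

Definition sublatticeM (K : pairT -> Prop) : Prop :=
  (forall c, K c -> concept c) /\
  (forall c1 c2 m, K c1 -> K c2 -> is_meetM c1 c2 m -> K m) /\
  (forall c1 c2 m, K c1 -> K c2 -> is_joinM c1 c2 m -> K m).

Definition blockM (K : pairT -> Prop) : Prop :=
  sublatticeM K /\
  (exists c, concept c /\ ~ K c) /\
  (exists k, K k /\ k <> botM /\ k <> topM) /\
  (forall k, K k -> k <> botM -> k <> topM ->
     forall x, concept x -> (leM k x \/ leM x k) -> x <> botM -> x <> topM -> K x).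

Definition independentM (K1 K2 : pairT -> Prop) : Prop :=
  forall c, K1 c -> K2 c -> c = botM \/ c = topM.

Definition decomposition (Lam : Type) (K : Lam -> pairT -> Prop) : Prop :=
  (forall mu, blockM (K mu)) /\
  (forall mu nu, mu <> nu -> independentM (K mu) (K nu)) /\
  (forall c, concept c <-> exists mu, K mu c).

Definition phiA (a : A) (x : L) : A -> L :=
  fun a' => if excluded_middle_informative (a' = a) then x else cl_bot L.
Definition phiB (b : B) (y : L) : B -> L :=
  fun b' => if excluded_middle_informative (b' = b) then y else cl_bot L.

Definition Kstar (K : pairT -> Prop) (c : pairT) : Prop :=
  K c /\ c <> topM /\ c <> botM.

Definition A_mu (K : pairT -> Prop) (a : A) : Prop :=
  exists x : L, Kstar K (down (phiA a x), up (down (phiA a x))).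
Definition B_mu (K : pairT -> Prop) (b : B) : Prop :=
  exists y : L, Kstar K (down (up (phiB b y)), up (phiB b y)).

End Context.

Definition is_partition (X Lam : Type) (P : Lam -> X -> Prop) : Prop :=
  (forall mu, exists x, P mu x) /\
  (forall mu nu x, mu <> nu -> P mu x -> P nu x -> False) /\
  (forall x, exists mu, P mu x).

(* For an object a, the concepts generated by phi_{a,x} all lie above the one
   generated by phi_{a,top}, which normalization makes non-trivial.  Hence if some
   of them lies in K_mu^*, closure of the block under comparability puts that
   top-concept in K_mu, and independence of the blocks makes mu unique; the
   top-concept also lies in some block, which gives the covering.  A non-trivial
   concept <g, f> lies below the concept of phi_{a, f a} for any a with
   f a <> bot, so every block meets some A_mu.  The attribute side is the same
   argument with the order reversed. *)

From mathcomp Require Import ssreflect ssrfun ssrbool eqtype ssrnat fintype.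
From Stdlib Require Import FunctionalExtensionality ClassicalEpsilon Classical.

Set Implicit Arguments.
Unset Strict Implicit.
Unset Printing Implicit Defensive.

Section CompleteLatticeFacts.
Variable L : CompleteLattice.

Lemma cl_bot_le (x : L) : cl_le (cl_bot L) x.
Proof. exact: cl_inf_lb. Qed.

Lemma cl_le_top (x : L) : cl_le x (cl_top L).
Proof. exact: cl_inf_glb. Qed.

Lemma cl_le_bot_eq (x : L) : cl_le x (cl_bot L) -> x = cl_bot L.
Proof. by move=> le_x_bot; apply: cl_antisym le_x_bot (cl_bot_le x). Qed.

Lemma cl_top_le_eq (x : L) : cl_le (cl_top L) x -> x = cl_top L.
Proof. by move=> le_top_x; apply: cl_antisym (cl_le_top x) le_top_x. Qed.

Lemma cl_bot_neq_top (x : L) : x <> cl_bot L -> cl_bot L <> cl_top L.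
Proof.
by move=> x_neq_bot bot_top; apply/x_neq_bot/cl_le_bot_eq; rewrite bot_top; exact: cl_le_top.
Qed.

End CompleteLatticeFacts.

Section AdjointTriple.
Variables (L : CompleteLattice) (conj ld rd : L -> L -> L).
Hypothesis adj : is_adjoint_triple conj ld rd.

Lemma le_ld x y z : cl_le x (ld z y) <-> cl_le (conj x y) z.
Proof. exact: (adj x y z).1. Qed.

Lemma le_rd x y z : cl_le y (rd z x) <-> cl_le (conj x y) z.
Proof. exact: iff_sym (adj x y z).2. Qed.

Lemma ld_bot z : ld z (cl_bot L) = cl_top L.
Proof. by apply: cl_top_le_eq; apply/le_ld/le_rd; exact: cl_bot_le. Qed.

Lemma rd_bot z : rd z (cl_bot L) = cl_top L.
Proof. by apply: cl_top_le_eq; apply/le_rd/le_ld; exact: cl_bot_le. Qed.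

Hypothesis unit : forall x, conj x (cl_top L) = x /\ conj (cl_top L) x = x.

Lemma top_le_ld z y : cl_le (cl_top L) (ld z y) <-> cl_le y z.
Proof. by rewrite -{2}(proj2 (unit y)); exact: le_ld. Qed.

Lemma top_le_rd z x : cl_le (cl_top L) (rd z x) <-> cl_le x z.
Proof. by rewrite -{2}(proj1 (unit x)); exact: le_rd. Qed.

Lemma ld_top z : ld z (cl_top L) = z.
Proof.
apply: cl_antisym.
- by have /le_ld := cl_refl (ld z (cl_top L)); rewrite (proj1 (unit _)).
- by apply/le_ld; rewrite (proj1 (unit z)); exact: cl_refl.
Qed.

Lemma rd_top z : rd z (cl_top L) = z.
Proof.
apply: cl_antisym.
- by have /le_rd := cl_refl (rd z (cl_top L)); rewrite (proj2 (unit _)).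
- by apply/le_rd; rewrite (proj2 (unit z)); exact: cl_refl.
Qed.

End AdjointTriple.

Section BlockPartition.
Variables (L : CompleteLattice) (n : nat) (ld rd : 'I_n -> L -> L -> L).
Variables (A B : Type) (R : A -> B -> L) (sigma : A -> B -> 'I_n).
Variables (Lam : Type) (K : Lam -> pairT L A B -> Prop).
Hypothesis decK : decomposition ld rd R sigma K.

Local Notation concept := (concept ld rd R sigma).
Local Notation topM := (topM L A B).
Local Notation botM := (botM L A B).

Variables (X : Type) (c : X -> L -> pairT L A B).
Hypothesis concept_c : forall a x, concept (c a x).
Hypothesis comparable_c_top :
  forall a x, leM (c a x) (c a (cl_top L)) \/ leM (c a (cl_top L)) (c a x).
Hypothesis c_top_neq_botM : forall a, c a (cl_top L) <> botM.
Hypothesis c_top_neq_topM : forall a, c a (cl_top L) <> topM.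
Hypothesis nontrivial_comparable_c : forall k, concept k -> k <> botM -> k <> topM ->
  exists a x, (leM k (c a x) \/ leM (c a x) k) /\ c a x <> botM /\ c a x <> topM.

Lemma block_partition : is_partition (fun mu a => exists x, Kstar (K mu) (c a x)).
Proof.
have [blockK [indepK coverK]] := decK.
have Kstar_c_top mu a x : Kstar (K mu) (c a x) -> K mu (c a (cl_top L)).
  move=> [Kc [c_neq_top c_neq_bot]]; have [_ [_ [_ closedK]]] := blockK mu.
  exact: (closedK _ Kc c_neq_bot c_neq_top _ (concept_c a _) (comparable_c_top a x)
    (@c_top_neq_botM a) (@c_top_neq_topM a)).
split; [|split].
- move=> mu; have [_ [_ [[k [Kk [k_neq_bot k_neq_top]]] closedK]]] := blockK mu.
  have [a [x [cmp [c_neq_bot c_neq_top]]]] :=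
    nontrivial_comparable_c ((coverK k).2 (ex_intro _ mu Kk)) k_neq_bot k_neq_top.
  exists a, x; split; last by split.
  exact: closedK _ Kk k_neq_bot k_neq_top _ (concept_c a x) cmp c_neq_bot c_neq_top.
- move=> mu nu a mu_neq_nu [x Kx] [y Ky].
  have := indepK _ _ mu_neq_nu _ (Kstar_c_top _ _ _ Kx) (Kstar_c_top _ _ _ Ky).
  by case; [exact: c_top_neq_botM | exact: c_top_neq_topM].
- move=> a; have [mu Kmu] := (coverK _).1 (concept_c a (cl_top L)).
  by exists mu, (cl_top L).
Qed.

End BlockPartition.

Lemma phiA_id (L : CompleteLattice) (A : Type) (a : A) (x : L) : phiA a x a = x.
Proof. by rewrite /phiA; case: excluded_middle_informative. Qed.

Lemma phiB_id (L : CompleteLattice) (B : Type) (b : B) (y : L) : phiB b y b = y.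
Proof. by rewrite /phiB; case: excluded_middle_informative. Qed.

Lemma phiA_neq (L : CompleteLattice) (A : Type) (a a' : A) (x : L) :
  a' <> a -> phiA a x a' = cl_bot L.
Proof. by rewrite /phiA; case: excluded_middle_informative. Qed.

Lemma phiB_neq (L : CompleteLattice) (B : Type) (b b' : B) (y : L) :
  b' <> b -> phiB b y b' = cl_bot L.
Proof. by rewrite /phiB; case: excluded_middle_informative. Qed.

Lemma phiA_le (L : CompleteLattice) (A : Type) (a : A) (x : L) (f : A -> L) :
  cl_le x (f a) -> forall a', cl_le (phiA a x a') (f a').
Proof.
move=> le_x a'; case: (classic (a' = a)) => [-> | ne]; first by rewrite phiA_id.
by rewrite phiA_neq //; exact: cl_bot_le.
Qed.

Lemma phiB_le (L : CompleteLattice) (B : Type) (b : B) (y : L) (g : B -> L) :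
  cl_le y (g b) -> forall b', cl_le (phiB b y b') (g b').
Proof.
move=> le_y b'; case: (classic (b' = b)) => [-> | ne]; first by rewrite phiB_id.
by rewrite phiB_neq //; exact: cl_bot_le.
Qed.

Section ConceptLattice.
Variables (L : CompleteLattice) (n : nat) (conj ld rd : 'I_n -> L -> L -> L).
Hypothesis adj : forall i, is_adjoint_triple (conj i) (ld i) (rd i).
Variables (A B : Type) (R : A -> B -> L) (sigma : A -> B -> 'I_n).

Local Notation bot := (cl_bot L).
Local Notation top := (cl_top L).
Local Notation up := (up ld R sigma).
Local Notation down := (down rd R sigma).
Local Notation concept := (concept ld rd R sigma).
Local Notation topM := (topM L A B).
Local Notation botM := (botM L A B).

Lemma le_down (f : A -> L) (g : B -> L) :
  (forall b, cl_le (g b) (down f b)) <->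
  (forall a b, cl_le (conj (sigma a b) (f a) (g b)) (R a b)).
Proof.
split=> [le_g a b | le_conj b].
- by apply/(le_rd (adj _)); apply: cl_trans (le_g b) _; apply: cl_inf_lb; exists a.
- by apply: cl_inf_glb => _ [a ->]; apply/(le_rd (adj _)).
Qed.

Lemma le_up (f : A -> L) (g : B -> L) :
  (forall a, cl_le (f a) (up g a)) <->
  (forall a b, cl_le (conj (sigma a b) (f a) (g b)) (R a b)).
Proof.
split=> [le_f a b | le_conj a].
- by apply/(le_ld (adj _)); apply: cl_trans (le_f a) _; apply: cl_inf_lb; exists b.
- by apply: cl_inf_glb => _ [b ->]; apply/(le_ld (adj _)).
Qed.

Lemma le_up_down (f : A -> L) a : cl_le (f a) (up (down f) a).
Proof. by move: a; apply/le_up/le_down => b; exact: cl_refl. Qed.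

Lemma le_down_up (g : B -> L) b : cl_le (g b) (down (up g) b).
Proof. by move: b; apply/le_down/le_up => a; exact: cl_refl. Qed.

Lemma down_anti (f1 f2 : A -> L) :
  (forall a, cl_le (f1 a) (f2 a)) -> forall b, cl_le (down f2 b) (down f1 b).
Proof.
move=> le_f; apply/le_down => a b; apply/(le_ld (adj _)).
apply: cl_trans (le_f a) _; apply/(le_ld (adj _)); move: a b.
by apply/le_down => b; exact: cl_refl.
Qed.

Lemma up_anti (g1 g2 : B -> L) :
  (forall b, cl_le (g1 b) (g2 b)) -> forall a, cl_le (up g2 a) (up g1 a).
Proof.
move=> le_g; apply/le_up => a b; apply/(le_rd (adj _)).
apply: cl_trans (le_g b) _; apply/(le_rd (adj _)); move: a b.
by apply/le_up => a; exact: cl_refl.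
Qed.

Lemma down_up_down (f : A -> L) : down (up (down f)) = down f.
Proof.
apply: functional_extensionality => b; apply: cl_antisym.
- by apply: down_anti; exact: le_up_down.
- exact: le_down_up.
Qed.

Lemma up_down_up (g : B -> L) : up (down (up g)) = up g.
Proof.
apply: functional_extensionality => a; apply: cl_antisym.
- by apply: up_anti; exact: le_down_up.
- exact: le_up_down.
Qed.

Lemma down_phiA a x b : down (phiA a x) b = rd (sigma a b) (R a b) x.
Proof.
apply: cl_antisym; first by apply: cl_inf_lb; exists a; rewrite phiA_id.
apply: cl_inf_glb => _ [a' ->]; case: (classic (a' = a)) => [-> | ne].
  by rewrite phiA_id; exact: cl_refl.
by rewrite phiA_neq // (rd_bot (adj _)); exact: cl_le_top.
Qed.

Lemma up_phiB b y a : up (phiB b y) a = ld (sigma a b) (R a b) y.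
Proof.
apply: cl_antisym; first by apply: cl_inf_lb; exists b; rewrite phiB_id.
apply: cl_inf_glb => _ [b' ->]; case: (classic (b' = b)) => [-> | ne].
  by rewrite phiB_id; exact: cl_refl.
by rewrite phiB_neq // (ld_bot (adj _)); exact: cl_le_top.
Qed.

Lemma up_bot : up (fun _ => bot) = fun _ => top.
Proof.
apply: functional_extensionality => a; apply: cl_top_le_eq.
by apply: cl_inf_glb => _ [b ->]; rewrite (ld_bot (adj _)); exact: cl_refl.
Qed.

Lemma down_bot : down (fun _ => bot) = fun _ => top.
Proof.
apply: functional_extensionality => b; apply: cl_top_le_eq.
by apply: cl_inf_glb => _ [a ->]; rewrite (rd_bot (adj _)); exact: cl_refl.
Qed.

Lemma concept_down (f : A -> L) : concept (down f, up (down f)).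
Proof. by split; last exact: down_up_down. Qed.

Lemma concept_up (g : B -> L) : concept (down (up g), up g).
Proof. by split; first exact: up_down_up. Qed.

Lemma leM_botM_eq k : concept k -> leM k botM -> k = botM.
Proof.
case: k => g f [/= <- _] le_g_bot.
have -> : g = fun _ => bot.
  by apply: functional_extensionality => b; exact: cl_le_bot_eq (le_g_bot b).
by rewrite up_bot.
Qed.

Lemma concept_neq_botM_ex (g : B -> L) (f : A -> L) :
  concept (g, f) -> (g, f) <> botM -> exists b, g b <> bot.
Proof.
case=> /= up_g _ k_neq_bot; apply: NNPP => no_b; apply: k_neq_bot.
have g_bot : g = fun _ => bot.
  by apply: functional_extensionality => b; apply: NNPP => gb; apply: no_b; exists b.
by rewrite -up_g g_bot up_bot.
Qed.

Lemma concept_neq_topM_ex (g : B -> L) (f : A -> L) :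
  concept (g, f) -> (g, f) <> topM -> exists a, f a <> bot.
Proof.
case=> /= _ down_f k_neq_top; apply: NNPP => no_a; apply: k_neq_top.
have f_bot : f = fun _ => bot.
  by apply: functional_extensionality => a; apply: NNPP => fa; apply: no_a; exists a.
by rewrite -down_f f_bot down_bot.
Qed.

Hypothesis unit : forall i (x : L), conj i x top = x /\ conj i top x = x.
Hypothesis norm : normalized_context R.

Lemma up_top : up (fun _ => top) = fun _ => bot.
Proof.
apply: functional_extensionality => a; apply: cl_le_bot_eq.
have [? [b [_ Rab]]] := norm.1 a.
apply: (cl_trans (y := ld (sigma a b) (R a b) top)); first by apply: cl_inf_lb; exists b.
by rewrite (ld_top (adj _) (unit _)) Rab; exact: cl_refl.
Qed.

Lemma topM_leM_eq k : concept k -> leM topM k -> k = topM.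
Proof.
case: k => g f [/= <- _] le_top_g.
have -> : g = fun _ => top.
  by apply: functional_extensionality => b; exact: cl_top_le_eq (le_top_g b).
by rewrite up_top.
Qed.

Definition obj_concept (a : A) (x : L) : pairT L A B :=
  (down (phiA a x), up (down (phiA a x))).

Definition attr_concept (b : B) (y : L) : pairT L A B :=
  (down (up (phiB b y)), up (phiB b y)).

Lemma obj_concept_le_top a x : leM (obj_concept a top) (obj_concept a x).
Proof.
move=> b /=; apply: down_anti; apply: phiA_le.
by rewrite phiA_id; exact: cl_le_top.
Qed.

Lemma obj_concept_neq_topM a x : x <> bot -> obj_concept a x <> topM.
Proof.
have [? [b2 [_ Rab2]]] := norm.1 a.
move=> x_neq_bot /(f_equal (fun c : pairT L A B => c.1 b2)) /=.
rewrite down_phiA Rab2 => rd_eq_top.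
apply/x_neq_bot/cl_le_bot_eq/(top_le_rd (adj (sigma a b2)) (unit _)).
by rewrite rd_eq_top; exact: cl_refl.
Qed.

Lemma obj_concept_top_neq_botM a : obj_concept a top <> botM.
Proof.
have [b1 [_ [Rab1 _]]] := norm.1 a.
move=> /(f_equal (fun c : pairT L A B => c.1 b1)) /=.
by rewrite down_phiA (rd_top (adj _) (unit _)).
Qed.

Lemma obj_concept_top_neq_topM a : obj_concept a top <> topM.
Proof.
have [b1 [_ [Rab1 _]]] := norm.1 a.
by apply: obj_concept_neq_topM => /esym; exact: cl_bot_neq_top Rab1.
Qed.

Lemma leM_obj_concept g f a : concept (g, f) -> leM (g, f) (obj_concept a (f a)).
Proof. by case=> _ /= <- b /=; apply: down_anti; exact: phiA_le (cl_refl _). Qed.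

Lemma nontrivial_comparable_obj_concept k : concept k -> k <> botM -> k <> topM ->
  exists a x, (leM k (obj_concept a x) \/ leM (obj_concept a x) k) /\
              obj_concept a x <> botM /\ obj_concept a x <> topM.
Proof.
case: k => g f conc_k k_neq_bot k_neq_top.
have [a fa_neq_bot] := concept_neq_topM_ex conc_k k_neq_top.
have le_k := leM_obj_concept a conc_k.
exists a, (f a); split; [by left | split; last exact: obj_concept_neq_topM].
by move=> c_bot; apply/k_neq_bot/(leM_botM_eq conc_k); rewrite -c_bot.
Qed.

Lemma attr_concept_le_top b y : leM (attr_concept b y) (attr_concept b top).
Proof.
move=> b' /=; apply: down_anti; apply: up_anti; apply: phiB_le.
by rewrite phiB_id; exact: cl_le_top.
Qed.

Lemma attr_concept_neq_botM b y : y <> bot -> attr_concept b y <> botM.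
Proof.
have [? [a2 [_ Ra2b]]] := norm.2 b.
move=> y_neq_bot /(f_equal (fun c : pairT L A B => c.2 a2)) /=.
rewrite up_phiB Ra2b => ld_eq_top.
apply/y_neq_bot/cl_le_bot_eq/(top_le_ld (adj (sigma a2 b)) (unit _)).
by rewrite ld_eq_top; exact: cl_refl.
Qed.

Lemma attr_concept_top_neq_topM b : attr_concept b top <> topM.
Proof.
have [a1 [_ [Ra1b _]]] := norm.2 b.
move=> /(f_equal (fun c : pairT L A B => c.2 a1)) /=.
by rewrite up_phiB (ld_top (adj _) (unit _)).
Qed.

Lemma attr_concept_top_neq_botM b : attr_concept b top <> botM.
Proof.
have [a1 [_ [Ra1b _]]] := norm.2 b.
by apply: attr_concept_neq_botM => /esym; exact: cl_bot_neq_top Ra1b.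
Qed.

Lemma leM_attr_concept g f b : concept (g, f) -> leM (attr_concept b (g b)) (g, f).
Proof.
case=> up_g down_f b' /=.
suff: cl_le (down (up (phiB b (g b))) b') (down (up g) b') by rewrite up_g down_f.
by apply: down_anti; apply: up_anti; exact: phiB_le (cl_refl _).
Qed.

Lemma nontrivial_comparable_attr_concept k : concept k -> k <> botM -> k <> topM ->
  exists b y, (leM k (attr_concept b y) \/ leM (attr_concept b y) k) /\
              attr_concept b y <> botM /\ attr_concept b y <> topM.
Proof.
case: k => g f conc_k k_neq_bot k_neq_top.
have [b gb_neq_bot] := concept_neq_botM_ex conc_k k_neq_bot.
have le_k := leM_attr_concept b conc_k.
exists b, (g b); split; [by right | split; first exact: attr_concept_neq_botM].
by move=> c_top; apply/k_neq_top/(topM_leM_eq conc_k); rewrite -c_top.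
Qed.

Lemma A_mu_partition (Lam : Type) (K : Lam -> pairT L A B -> Prop) :
  decomposition ld rd R sigma K -> is_partition (fun mu => A_mu ld rd R sigma (K mu)).
Proof.
move=> decK; apply: (block_partition (c := obj_concept) decK).
- by move=> a x; exact: concept_down.
- by move=> a x; right; exact: obj_concept_le_top.
- exact: obj_concept_top_neq_botM.
- exact: obj_concept_top_neq_topM.
- exact: nontrivial_comparable_obj_concept.
Qed.

Lemma B_mu_partition (Lam : Type) (K : Lam -> pairT L A B -> Prop) :
  decomposition ld rd R sigma K -> is_partition (fun mu => B_mu ld rd R sigma (K mu)).
Proof.
move=> decK; apply: (block_partition (c := attr_concept) decK).
- by move=> b y; exact: concept_up.
- by move=> b y; left; exact: attr_concept_le_top.
- exact: attr_concept_top_neq_botM.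
- exact: attr_concept_top_neq_topM.
- exact: nontrivial_comparable_attr_concept.
Qed.

End ConceptLattice.

Theorem proposition33 (L : CompleteLattice) (n : nat)
  (conj ld rd : 'I_n -> L -> L -> L)
  (Htriple : forall i, is_adjoint_triple (conj i) (ld i) (rd i))
  (Hunit : forall i (x : L), conj i x (cl_top L) = x /\ conj i (cl_top L) x = x)
  (A B : Type) (HA : inhabited A) (HB : inhabited B)
  (R : A -> B -> L) (sigma : A -> B -> 'I_n)
  (Hnorm : normalized_context R)
  (Lam : Type) (K : Lam -> pairT L A B -> Prop)
  (Hdec : decomposition ld rd R sigma K) :
  is_partition (fun mu => A_mu ld rd R sigma (K mu)) /\
  is_partition (fun mu => B_mu ld rd R sigma (K mu)).
Proof.
split.
- exact: (A_mu_partition Htriple Hunit Hnorm Hdec).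
- exact: (B_mu_partition Htriple Hunit Hnorm Hdec).
Qed.
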